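(* In the setting described in the context, let $\sigma\in\mathcal{B}_2$ be a $\Sigma_m$-proximity on $A$. Then for all $x,y\in A$: $\sigma(x,y)=\sigma(y,x)$ (symmetry) and $\sigma(x,x)\ge\sigma(x,y)$ (egocentrism).
   Context: $A$ is a nonempty set (possibly infinite). $\mathcal{B}_1$ is a set of functions $A\to\mathbb{R}$ forming a real linear space containing all constant functions, and $\mu:\mathcal{B}_1\to\mathbb{R}$ is a linear functional with $\mu(c)=c$ for every constant function $c$ and monotone: if $f,g\in\mathcal{B}_1$ and $f(x)\ge g(x)$ for all $x$, then $\mu(f)\ge\mu(g)$. For $f:A^2\to\mathbb{R}$ such that $y\mapsto f(x,y)$ lies in $\mathcal{B}_1$ for every $x$, write $f(x,\cdot)=\mu(y\mapsto f(x,y))$, a function of $x$. $\mathcal{B}_2$ is a set of functions $A^2\to\mathbb{R}$ forming a real linear space that contains all constant functions and all functions $(x,y)\mapsto h(x)$ and $(x,y)\mapsto h(y)$ with $h\in\mathcal{B}_1$, and such that for every $f\in\mathcal{B}_2$: $y\mapsto f(x,y)\in\mathcal{B}_1$ for every $x\in A$, $x\mapsto f(x,\cdot)\in\mathcal{B}_1$, and $x\mapsto f(x,x)\in\mathcal{B}_1$. For $m\in\mathbb{R}$, a function $\sigma\in\mathcal{B}_2$ is a $\Sigma_m$-proximity on $A$ if for all $x,y,z\in A$: (1) $\sigma(x,\cdot)=m$; (2) $\sigma(x,y)+\sigma(x,z)-\sigma(y,z)\le\sigma(x,x)$, with strict inequality whenever $z=y$ and $x\ne y$. *)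

From Stdlib Require Export Reals.
Open Scope R_scope.

Definition lin_space {X : Type} (B : (X -> R) -> Prop) : Prop :=
  B (fun _ => 0) /\
  (forall f g : X -> R, B f -> B g -> B (fun x => f x + g x)) /\
  (forall (a : R) (f : X -> R), B f -> B (fun x => a * f x)).

Definition has_constants {X : Type} (B : (X -> R) -> Prop) : Prop :=
  forall c : R, B (fun _ => c).

(* Standing assumptions on B1 and the mean mu (mu is a total map, only
   constrained on B1). *)
Definition mean_space {A : Type} (B1 : (A -> R) -> Prop) (mu : (A -> R) -> R) : Prop :=
  lin_space B1 /\ has_constants B1 /\
  (forall f g, B1 f -> B1 g -> mu (fun x => f x + g x) = mu f + mu g) /\
  (forall a f, B1 f -> mu (fun x => a * f x) = a * mu f) /\
  (forall c : R, mu (fun _ => c) = c) /\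
  (forall f g, B1 f -> B1 g -> (forall x, f x >= g x) -> mu f >= mu g).

Definition B2_space {A : Type} (B1 : (A -> R) -> Prop) (mu : (A -> R) -> R)
    (B2 : (A -> A -> R) -> Prop) : Prop :=
  B2 (fun _ _ => 0) /\
  (forall f g, B2 f -> B2 g -> B2 (fun x y => f x y + g x y)) /\
  (forall a f, B2 f -> B2 (fun x y => a * f x y)) /\
  (forall c : R, B2 (fun _ _ => c)) /\
  (forall h, B1 h -> B2 (fun x _ => h x)) /\
  (forall h, B1 h -> B2 (fun _ y => h y)) /\
  (forall f, B2 f -> forall x, B1 (fun y => f x y)) /\
  (forall f, B2 f -> B1 (fun x => mu (fun y => f x y))) /\
  (forall f, B2 f -> B1 (fun x => f x x)).

Definition Sigma_proximity {A : Type} (mu : (A -> R) -> R)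
    (B2 : (A -> A -> R) -> Prop) (m : R) (sigma : A -> A -> R) : Prop :=
  B2 sigma /\
  (forall x, mu (fun y => sigma x y) = m) /\
  (forall x y z, sigma x y + sigma x z - sigma y z <= sigma x x) /\
  (forall x y, x <> y -> sigma x y + sigma x y - sigma y y < sigma x x).

(* Symmetry: the triangle condition at (x, y, x) and (y, x, y) gives
   sigma x y <= sigma y x and the reverse.  Egocentrism: the triangle
   condition at (x, y, z) says z |-> sigma x z - sigma y z is bounded by
   sigma x x - sigma x y; its mean is m - m = 0, and a mean never exceeds
   an upper bound. *)

From Stdlib Require Import Reals Lra FunctionalExtensionality.
Open Scope R_scope.

Section Mean.

Context {A : Type} {B1 : (A -> R) -> Prop} {mu : (A -> R) -> R}.
Hypothesis Hmu : mean_space B1 mu.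

Lemma fun_sub_eq_add_opp (f g : A -> R) :
  (fun z => f z - g z) = (fun z => f z + (-1) * g z).
Proof. apply functional_extensionality; intro z; ring. Qed.

Lemma B1_sub (f g : A -> R) : B1 f -> B1 g -> B1 (fun z => f z - g z).
Proof.
  destruct Hmu as [[_ [Badd Bscale]] _]; intros Bf Bg.
  rewrite fun_sub_eq_add_opp; auto.
Qed.

Lemma mu_sub (f g : A -> R) :
  B1 f -> B1 g -> mu (fun z => f z - g z) = mu f - mu g.
Proof.
  destruct Hmu as [[_ [_ Bscale]] [_ [mu_add [mu_scale _]]]]; intros Bf Bg.
  rewrite fun_sub_eq_add_opp, mu_add, mu_scale by auto; ring.
Qed.

Lemma mu_le_const (h : A -> R) (c : R) :
  B1 h -> (forall z, h z <= c) -> mu h <= c.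
Proof.
  destruct Hmu as [_ [Bconst [_ [_ [mu_const mu_mono]]]]]; intros Bh h_le.
  rewrite <- (mu_const c).
  apply Rge_le, mu_mono; auto.
  intro z; apply Rle_ge, h_le.
Qed.

End Mean.

Section Proximity.

Context {A : Type} {sigma : A -> A -> R}.
Hypothesis sigma_triangle :
  forall x y z, sigma x y + sigma x z - sigma y z <= sigma x x.

Lemma proximity_sym (x y : A) : sigma x y = sigma y x.
Proof.
  pose proof (sigma_triangle x y x); pose proof (sigma_triangle y x y); lra.
Qed.

Lemma proximity_egocentric {B1 : (A -> R) -> Prop} {mu : (A -> R) -> R}
    {m : R} :
  mean_space B1 mu ->
  (forall x, B1 (sigma x)) -> (forall x, mu (sigma x) = m) ->
  forall x y, sigma x y <= sigma x x.
Proof.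
  intros Hmu B1_row mu_row x y.
  assert (mean_zero : mu (fun z => sigma x z - sigma y z) = 0).
  { rewrite (mu_sub Hmu) by auto; rewrite !mu_row; ring. }
  assert (mean_bound :
    mu (fun z => sigma x z - sigma y z) <= sigma x x - sigma x y).
  { apply (mu_le_const Hmu); [now apply (B1_sub Hmu) |].
    intro z; pose proof (sigma_triangle x y z); lra. }
  lra.
Qed.

End Proximity.

Theorem proposition1 (A : Type) (Hne : inhabited A)
    (B1 : (A -> R) -> Prop) (mu : (A -> R) -> R)
    (B2 : (A -> A -> R) -> Prop) (m : R) (sigma : A -> A -> R) :
  mean_space B1 mu ->
  B2_space B1 mu B2 ->
  Sigma_proximity mu B2 m sigma ->
  forall x y : A, sigma x y = sigma y x /\ sigma x x >= sigma x y.
Proof.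
  intros Hmu (_ & _ & _ & _ & _ & _ & B2_row & _)
    (B2_sigma & mu_row & triangle & _) x y.
  split.
  - exact (proximity_sym triangle x y).
  - apply Rle_ge, (proximity_egocentric triangle Hmu (B2_row _ B2_sigma) mu_row).
Qed.
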